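(* Let $N\ge 3$ be odd, $p<0$, and let $0\le r_1<r_2<\dots<r_N\le 1$ be distinct points. Define $\sigma\in S_N$ by $\sigma(1)=1$, $\sigma(i)=\frac{N-i+3}{2}$ for even $i>1$, and $\sigma(i)=\frac{2N-i+3}{2}$ for odd $i>1$. Then $h^*=h[\sigma]$ is an optimal Hamiltonian cycle: $E(h^* )\le E(h)$ for every Hamiltonian cycle $h$. (In $h^*$ each vertex $r_a$ is adjacent to $r_{a+(N-1)/2}$ and $r_{a+(N+1)/2}$, indices taken mod $N$ in $\{1,\dots,N\}$.)
   Context: The points are the vertices of the complete graph $\mathcal K_N$. For $p\in\mathbb R$ the weight of the edge $\{r_i,r_j\}$ is $w_{ij}=|r_i-r_j|^p$, and the cost of a Hamiltonian cycle $h$ is $E(h)=\sum_{e\in h}w_e$. For $\sigma\in S_N$, $h[\sigma]$ denotes the Hamiltonian cycle with edges $\{r_{\sigma(i)},r_{\sigma(i+1)}\}$, $i=1,\dots,N$, with $\sigma(N+1):=\sigma(1)$. *)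

From Stdlib Require Import Reals Arith.
Open Scope R_scope.

(* Points are indexed 1..N: r : nat -> R, only r 1, ..., r N matter. *)

(* Edge weight w_{ij} = |r_i - r_j|^p (bases are > 0 since points are distinct). *)
Definition weight (p : R) (x y : R) : R := Rpower (Rabs (x - y)) p.

Fixpoint sumR (f : nat -> R) (n : nat) : R :=
  match n with
  | O => 0
  | S k => sumR f k + f (S k)
  end.

Definition cnext (N i : nat) : nat := if Nat.eqb i N then 1%nat else S i.

Definition is_perm (N : nat) (tau : nat -> nat) : Prop :=
  (forall i, (1 <= i <= N)%nat -> (1 <= tau i <= N)%nat) /\
  (forall i j, (1 <= i <= N)%nat -> (1 <= j <= N)%nat -> tau i = tau j -> i = j).

Definition cycle_cost (N : nat) (p : R) (r : nat -> R) (tau : nat -> nat) : R :=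
  sumR (fun i => weight p (r (tau i)) (r (tau (cnext N i)))) N.

Definition sigma_opt (N i : nat) : nat :=
  if Nat.eqb i 1 then 1%nat
  else if Nat.even i then ((N - i + 3) / 2)%nat
  else ((2 * N - i + 3) / 2)%nat.

From Stdlib Require Import Reals Arith Lra Lia List Permutation.
Open Scope R_scope.

(* Weak LP duality for the 2-matching relaxation: if potentials y satisfy
   y_i + y_j <= w_ij for all i <> j, then every Hamiltonian cycle costs at
   least 2 * sum_i y_i, because each vertex is an endpoint of exactly two of
   its edges.  For N = 2m+1 we exhibit potentials that are tight on every edge
   of h*.  Their feasibility only uses two properties of w_ij = |r_i - r_j|^p:
   the weight of an interval decreases when the interval grows (x^p is
   decreasing), and the quadrangle inequality w_ij + w_kl <= w_il + w_kj for
   i < k < j <= l (x^p is convex). *)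

Lemma Rpower_le_contravar (p s t : R) :
  p < 0 -> 0 < s <= t -> Rpower t p <= Rpower s p.
Proof.
  intros hp hst.
  replace p with (- - p) by ring. rewrite 2!(Rpower_Ropp _ (- p)).
  apply Rinv_le_contravar; [unfold Rpower; apply exp_pos|].
  apply Rle_Rpower_l; lra.
Qed.

Lemma Rpower_increment_le (p h s t : R) :
  p < 0 -> 0 <= h -> 0 < s <= t ->
  Rpower (s + h) p - Rpower s p <= Rpower (t + h) p - Rpower t p.
Proof.
  intros hp hh [hs hst].
  destruct (Req_dec s t) as [<-|hne]; [lra|].
  set (g := fun x => Rpower (x + h) p - Rpower x p).
  set (g' := fun x => p * Rpower (x + h) (p - 1) * 1 - p * Rpower x (p - 1)).
  destruct (MVT_cor2 g g' s t) as [c [hgc hc]]; [lra| |].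
  - intros c hc. apply derivable_pt_lim_minus.
    + apply (derivable_pt_lim_comp (fun x => x + h) (fun u => Rpower u p)).
      * replace 1 with (1 + 0) by ring.
        apply derivable_pt_lim_plus; [apply derivable_pt_lim_id | apply derivable_pt_lim_const].
      * apply derivable_pt_lim_power; lra.
    + apply derivable_pt_lim_power; lra.
  - assert (Rpower (c + h) (p - 1) <= Rpower c (p - 1))
      by (apply Rpower_le_contravar; lra).
    assert (0 <= g' c * (t - s)) by (apply Rmult_le_pos; unfold g'; nra).
    unfold g in hgc; lra.
Qed.

Lemma nat_step_le (D : nat -> R) (lo hi : nat) :
  (forall k, (lo <= k < hi)%nat -> D k <= D (S k)) ->
  forall a b, (lo <= a <= b)%nat -> (b <= hi)%nat -> D a <= D b.
Proof.
  intros hD a b hab hb. induction b as [|b IH].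
  - replace a with 0%nat by lia; lra.
  - destruct (Nat.eq_dec a (S b)) as [->|hne]; [lra|].
    apply (Rle_trans _ (D b)); [apply IH | apply hD]; lia.
Qed.

Lemma nat_step_ge (D : nat -> R) (lo hi : nat) :
  (forall k, (lo <= k < hi)%nat -> D (S k) <= D k) ->
  forall a b, (lo <= a <= b)%nat -> (b <= hi)%nat -> D b <= D a.
Proof.
  intros hD a b hab hb.
  enough (- D a <= - D b) by lra.
  apply (nat_step_le (fun k => - D k) lo hi); auto.
  intros k hk. specialize (hD k hk). lra.
Qed.

Lemma sumR_ext (f g : nat -> R) (n : nat) :
  (forall i, (1 <= i <= n)%nat -> f i = g i) -> sumR f n = sumR g n.
Proof.
  induction n as [|n IH]; intros hfg; simpl; [reflexivity|].
  rewrite IH, hfg; [reflexivity | lia | intros; apply hfg; lia].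
Qed.

Lemma sumR_le (f g : nat -> R) (n : nat) :
  (forall i, (1 <= i <= n)%nat -> f i <= g i) -> sumR f n <= sumR g n.
Proof.
  induction n as [|n IH]; intros hfg; simpl; [lra|].
  apply Rplus_le_compat; [apply IH; intros; apply hfg | apply hfg]; lia.
Qed.

Lemma sumR_plus (f g : nat -> R) (n : nat) :
  sumR (fun i => f i + g i) n = sumR f n + sumR g n.
Proof. induction n as [|n IH]; simpl; [ring | rewrite IH; ring]. Qed.

Lemma sumR_fold_right (f : nat -> R) (n : nat) :
  sumR f n = fold_right Rplus 0 (map f (seq 1 n)).
Proof.
  induction n as [|n IH]; [reflexivity|].
  rewrite seq_S, map_app, fold_right_app. simpl sumR. rewrite IH.
  replace (1 + n)%nat with (S n) by lia. simpl. clear IH.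
  induction (map f (seq 1 n)); simpl; lra.
Qed.

Lemma fold_right_Rplus_perm (l l' : list R) :
  Permutation l l' -> fold_right Rplus 0 l = fold_right Rplus 0 l'.
Proof. induction 1; simpl; lra. Qed.

Lemma sumR_perm (N : nat) (tau : nat -> nat) (f : nat -> R) :
  is_perm N tau -> sumR (fun i => f (tau i)) N = sumR f N.
Proof.
  intros [htau_range htau_inj]. rewrite !sumR_fold_right, <- map_map.
  apply fold_right_Rplus_perm, Permutation_map, NoDup_Permutation_bis.
  - apply FinFun.Injective_map_NoDup_in; [|apply seq_NoDup].
    intros i j hi hj. apply in_seq in hi, hj. apply htau_inj; lia.
  - rewrite length_map. lia.
  - intros j hj. apply in_map_iff in hj as [i [<- hi]]. apply in_seq in hi.
    apply in_seq. specialize (htau_range i ltac:(lia)). lia.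
Qed.

Lemma cnext_perm (N : nat) : is_perm N (cnext N).
Proof.
  unfold cnext; split.
  - intros i hi. destruct (Nat.eqb_spec i N); lia.
  - intros i j hi hj. destruct (Nat.eqb_spec i N), (Nat.eqb_spec j N); lia.
Qed.

Lemma cnext_neq (N i : nat) : (2 <= N)%nat -> (1 <= i <= N)%nat -> cnext N i <> i.
Proof. intros hN hi. unfold cnext. destruct (Nat.eqb_spec i N); lia. Qed.

Lemma is_perm_comp (N : nat) (s t : nat -> nat) :
  is_perm N s -> is_perm N t -> is_perm N (fun i => s (t i)).
Proof.
  intros [hs_range hs_inj] [ht_range ht_inj]. split.
  - intros i hi. apply hs_range, ht_range, hi.
  - intros i j hi hj hij. apply ht_inj, hs_inj; auto.
Qed.

Section TourLowerBound.

Variables (N : nat) (w : nat -> nat -> R) (y : nat -> R).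

Definition tour_cost (tau : nat -> nat) : R :=
  sumR (fun i => w (tau i) (tau (cnext N i))) N.

Lemma sumR_tour_potentials (tau : nat -> nat) :
  is_perm N tau -> sumR (fun i => y (tau i) + y (tau (cnext N i))) N = 2 * sumR y N.
Proof.
  intros htau. rewrite sumR_plus, (sumR_perm N tau y htau).
  rewrite (sumR_perm N (fun i => tau (cnext N i)) y) by (apply is_perm_comp, cnext_perm; auto).
  ring.
Qed.

Lemma tour_cost_ge_potentials (tau : nat -> nat) :
  (2 <= N)%nat ->
  (forall i j, (1 <= i <= N)%nat -> (1 <= j <= N)%nat -> i <> j -> y i + y j <= w i j) ->
  is_perm N tau -> 2 * sumR y N <= tour_cost tau.
Proof.
  intros hN hy htau. rewrite <- (sumR_tour_potentials tau htau).
  apply sumR_le. intros i hi.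
  destruct htau as [htau_range htau_inj]. destruct (cnext_perm N) as [hc_range _].
  apply hy; auto.
  intros e. apply (cnext_neq N i hN hi), htau_inj; auto.
Qed.

Lemma tour_cost_tight (tau : nat -> nat) : is_perm N tau ->
  (forall i, (1 <= i <= N)%nat -> y (tau i) + y (tau (cnext N i)) = w (tau i) (tau (cnext N i))) ->
  tour_cost tau = 2 * sumR y N.
Proof.
  intros htau htight. rewrite <- (sumR_tour_potentials tau htau).
  apply sumR_ext. intros i hi. symmetry. apply htight, hi.
Qed.

End TourLowerBound.

Lemma sigma_opt_one (m : nat) : sigma_opt (2*m+1) 1 = 1%nat.
Proof. reflexivity. Qed.

Lemma sigma_opt_even (m t : nat) :
  (1 <= t <= m)%nat -> sigma_opt (2*m+1) (2*t) = (m + 2 - t)%nat.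
Proof.
  intros ht. unfold sigma_opt.
  destruct (Nat.eqb_spec (2*t) 1); [lia|].
  rewrite Nat.even_mul. cbn [Nat.even orb].
  replace (2*m + 1 - 2*t + 3)%nat with ((m + 2 - t) * 2)%nat by lia.
  apply Nat.div_mul; lia.
Qed.

Lemma sigma_opt_odd (m t : nat) :
  (1 <= t <= m)%nat -> sigma_opt (2*m+1) (2*t+1) = (2*m + 2 - t)%nat.
Proof.
  intros ht. unfold sigma_opt.
  destruct (Nat.eqb_spec (2*t+1) 1); [lia|].
  rewrite Nat.even_add, Nat.even_mul. cbn [Nat.even orb Bool.eqb].
  replace (2 * (2*m + 1) - (2*t + 1) + 3)%nat with ((2*m + 2 - t) * 2)%nat by lia.
  apply Nat.div_mul; lia.
Qed.

Lemma odd_range_cases (m i : nat) : (1 <= i <= 2*m+1)%nat ->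
  i = 1%nat \/ exists t, (1 <= t <= m)%nat /\ (i = 2*t \/ i = 2*t+1)%nat.
Proof.
  intros hi. destruct (Nat.Even_or_Odd i) as [[t ->]|[t ->]].
  - right. exists t. lia.
  - destruct (Nat.eq_dec t 0) as [->|ht]; [left | right; exists t]; lia.
Qed.

Lemma sigma_opt_perm (m : nat) : is_perm (2*m+1) (sigma_opt (2*m+1)).
Proof.
  split.
  - intros i hi. destruct (odd_range_cases m i hi) as [->|[t [ht [->| ->]]]].
    + rewrite sigma_opt_one; lia.
    + rewrite sigma_opt_even; lia.
    + rewrite sigma_opt_odd; lia.
  - intros i j hi hj e.
    destruct (odd_range_cases m i hi) as [->|[t [ht [->| ->]]]];
    destruct (odd_range_cases m j hj) as [->|[u [hu [->| ->]]]];
    rewrite ?sigma_opt_one, ?sigma_opt_even, ?sigma_opt_odd in e by lia; lia.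
Qed.

Section OddTourPotentials.

Variables (m : nat) (w : nat -> nat -> R).

Hypothesis w_sym : forall i j, w i j = w j i.

Hypothesis w_nested : forall i k l j,
  (1 <= i <= k)%nat -> (k < l <= j)%nat -> (j <= 2*m+1)%nat -> w i j <= w k l.

Hypothesis w_quadrangle : forall i k j l,
  (1 <= i < k)%nat -> (k < j <= l)%nat -> (l <= 2*m+1)%nat ->
  w i j + w k l <= w i l + w k j.

(* The vertices 1..m+1 are "low", the vertices m+1+k (1 <= k <= m) "high";
   h* consists of the edges {k, m+1+k}, {k+1, m+1+k} and {1, m+1}, and the
   potentials below are the unique ones that are tight on all of them. *)
Definition rung_gap (k : nat) : R := w (S k) (m+1+k) - w k (m+1+k).

Definition low_pot (i : nat) : R :=
  (w 1 (m+1) - sumR rung_gap m) / 2 + sumR rung_gap (i - 1).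

Definition pot (i : nat) : R :=
  if (i <=? m+1)%nat then low_pot i else w (i - (m+1)) i - low_pot (i - (m+1)).

Lemma pot_low (i : nat) : (i <= m+1)%nat -> pot i = low_pot i.
Proof. intros hi. unfold pot. destruct (Nat.leb_spec i (m+1)); [reflexivity | lia]. Qed.

Lemma pot_high (k : nat) : (1 <= k)%nat -> pot (m+1+k) = w k (m+1+k) - low_pot k.
Proof.
  intros hk. unfold pot. destruct (Nat.leb_spec (m+1+k) (m+1)); [lia|].
  replace (m + 1 + k - (m + 1))%nat with k by lia. reflexivity.
Qed.

Lemma low_pot_succ (k : nat) : (1 <= k)%nat -> low_pot (S k) = low_pot k + rung_gap k.
Proof.
  intros hk. unfold low_pot. replace (S k - 1)%nat with k by lia.
  destruct k as [|k]; [lia|]. simpl sumR. rewrite Nat.sub_0_r. ring.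
Qed.

Lemma low_pot_tight_first : low_pot 1 + low_pot (m+1) = w 1 (m+1).
Proof. unfold low_pot. replace (m + 1 - 1)%nat with m by lia. simpl sumR. lra. Qed.

Lemma pot_tight_rung (k : nat) : (1 <= k <= m)%nat ->
  pot k + pot (m+1+k) = w k (m+1+k).
Proof. intros hk. rewrite pot_low, pot_high by lia. ring. Qed.

Lemma pot_tight_diag (k : nat) : (1 <= k <= m)%nat ->
  pot (S k) + pot (m+1+k) = w (S k) (m+1+k).
Proof.
  intros hk. rewrite pot_low, pot_high, low_pot_succ by lia.
  unfold rung_gap. ring.
Qed.

Lemma rung_gap_nonneg (k : nat) : (1 <= k <= m)%nat -> 0 <= rung_gap k.
Proof.
  intros hk. unfold rung_gap.
  pose proof (w_nested k (S k) (m+1+k) (m+1+k) ltac:(lia) ltac:(lia) ltac:(lia)). lra.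
Qed.

Lemma pot_feasible_low_high (a b : nat) : (1 <= a <= m+1)%nat -> (1 <= b <= m)%nat ->
  pot a + pot (m+1+b) <= w a (m+1+b).
Proof.
  intros ha hb. rewrite pot_low, pot_high by lia.
  set (D := fun k => w k (m+1+b) - low_pot k).
  assert (hstep : forall k, (1 <= k)%nat ->
    D (S k) - D k = w (S k) (m+1+b) - w k (m+1+b) - rung_gap k).
  { intros k hk. unfold D. rewrite low_pot_succ by lia. ring. }
  enough (D b <= D a) by (unfold D in *; lra).
  destruct (Nat.le_gt_cases b a).
  - apply (nat_step_le D b (m+1)); try lia.
    intros k hk. specialize (hstep k ltac:(lia)). unfold rung_gap in hstep.
    pose proof (w_quadrangle k (S k) (m+1+b) (m+1+k) ltac:(lia) ltac:(lia) ltac:(lia)).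
    lra.
  - apply (nat_step_ge D 1 b); try lia.
    intros k hk. specialize (hstep k ltac:(lia)). unfold rung_gap in hstep.
    pose proof (w_quadrangle k (S k) (m+1+k) (m+1+b) ltac:(lia) ltac:(lia) ltac:(lia)).
    lra.
Qed.

Lemma pot_feasible_low_low (a b : nat) : (1 <= a < b)%nat -> (b <= m+1)%nat ->
  pot a + pot b <= w a b.
Proof.
  intros hab hb. rewrite !pot_low by lia.
  set (E := fun i j => w i j - low_pot i - low_pot j).
  enough (E 1%nat (m+1)%nat <= E a (m+1)%nat /\ E a (m+1)%nat <= E a b)
    by (pose proof low_pot_tight_first; unfold E in *; lra).
  split.
  - apply (nat_step_le (fun i => E i (m+1)%nat) 1 a); try lia.
    intros k hk. unfold E. rewrite low_pot_succ by lia. unfold rung_gap.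
    pose proof (w_quadrangle k (S k) (m+1) (m+1+k) ltac:(lia) ltac:(lia) ltac:(lia)).
    lra.
  - apply (nat_step_ge (E a) b (m+1)); try lia.
    intros k hk. unfold E. rewrite low_pot_succ by lia.
    pose proof (rung_gap_nonneg k ltac:(lia)).
    pose proof (w_nested a a k (S k) ltac:(lia) ltac:(lia) ltac:(lia)).
    lra.
Qed.

Lemma pot_feasible_high_high (a b : nat) : (1 <= a < b)%nat -> (b <= m)%nat ->
  pot (m+1+a) + pot (m+1+b) <= w (m+1+a) (m+1+b).
Proof.
  intros hab hb.
  pose proof (pot_feasible_low_high 1 a ltac:(lia) ltac:(lia)).
  pose proof (pot_feasible_low_high (m+1) b ltac:(lia) ltac:(lia)).
  pose proof low_pot_tight_first. rewrite <- !pot_low in * by lia.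
  pose proof (w_nested 1 1 (m+1) (m+1+a) ltac:(lia) ltac:(lia) ltac:(lia)).
  pose proof (w_nested (m+1) (m+1+a) (m+1+b) (m+1+b) ltac:(lia) ltac:(lia) ltac:(lia)).
  lra.
Qed.

Lemma pot_feasible (i j : nat) :
  (1 <= i <= 2*m+1)%nat -> (1 <= j <= 2*m+1)%nat -> i <> j -> pot i + pot j <= w i j.
Proof.
  assert (hlt : forall a b, (1 <= a < b)%nat -> (b <= 2*m+1)%nat -> pot a + pot b <= w a b).
  { intros a b hab hb.
    destruct (Nat.le_gt_cases b (m+1)); [apply pot_feasible_low_low; lia|].
    replace b with (m+1 + (b - (m+1)))%nat by lia.
    destruct (Nat.le_gt_cases a (m+1)); [apply pot_feasible_low_high; lia|].
    replace a with (m+1 + (a - (m+1)))%nat by lia.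
    apply pot_feasible_high_high; lia. }
  intros hi hj hij. destruct (Nat.lt_total i j) as [hij_lt | [-> | hji_lt]].
  - apply hlt; lia.
  - contradiction.
  - rewrite Rplus_comm, w_sym. apply hlt; lia.
Qed.

Lemma pot_tight_sigma_opt (i : nat) : (1 <= m)%nat -> (1 <= i <= 2*m+1)%nat ->
  pot (sigma_opt (2*m+1) i) + pot (sigma_opt (2*m+1) (cnext (2*m+1) i))
  = w (sigma_opt (2*m+1) i) (sigma_opt (2*m+1) (cnext (2*m+1) i)).
Proof.
  intros hm hi. unfold cnext.
  destruct (odd_range_cases m i hi) as [->|[t [ht [->| ->]]]].
  - destruct (Nat.eqb_spec 1 (2*m+1)); [lia|].
    rewrite sigma_opt_one,
      (sigma_opt_even m 1 ltac:(lia) : sigma_opt (2*m+1) 2 = (m + 2 - 1)%nat).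
    replace (m + 2 - 1)%nat with (m+1)%nat by lia.
    rewrite !pot_low by lia. apply low_pot_tight_first.
  - destruct (Nat.eqb_spec (2*t) (2*m+1)); [lia|].
    replace (S (2*t)) with (2*t+1)%nat by lia.
    rewrite sigma_opt_even, sigma_opt_odd by lia.
    replace (m + 2 - t)%nat with (S (m+1-t)) by lia.
    replace (2*m + 2 - t)%nat with (m+1 + (m+1-t))%nat by lia.
    apply pot_tight_diag; lia.
  - rewrite Rplus_comm, w_sym.
    destruct (Nat.eqb_spec (2*t+1) (2*m+1)).
    + replace t with m in * by lia.
      rewrite sigma_opt_one, sigma_opt_odd by lia.
      replace (2*m + 2 - m)%nat with (m+1+1)%nat by lia.
      apply pot_tight_rung; lia.
    + replace (S (2*t+1)) with (2*(t+1))%nat by lia.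
      rewrite sigma_opt_odd, sigma_opt_even by lia.
      replace (m + 2 - (t+1))%nat with (m+1-t)%nat by lia.
      replace (2*m + 2 - t)%nat with (m+1 + (m+1-t))%nat by lia.
      apply pot_tight_rung; lia.
Qed.

Theorem sigma_opt_tour_optimal (tau : nat -> nat) : (1 <= m)%nat -> is_perm (2*m+1) tau ->
  tour_cost (2*m+1) w (sigma_opt (2*m+1)) <= tour_cost (2*m+1) w tau.
Proof.
  intros hm htau.
  rewrite (tour_cost_tight (2*m+1) w pot _ (sigma_opt_perm m)).
  - apply tour_cost_ge_potentials; [lia | exact pot_feasible | exact htau].
  - intros i hi. apply pot_tight_sigma_opt; assumption.
Qed.

End OddTourPotentials.

Lemma weight_sym (p x y : R) : weight p x y = weight p y x.
Proof. unfold weight. rewrite Rabs_minus_sym. reflexivity. Qed.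

Section PowerWeights.

Variables (n : nat) (p : R) (r : nat -> R).

Hypothesis p_neg : p < 0.

Hypothesis r_incr : forall i j, (1 <= i < j)%nat -> (j <= n)%nat -> r i < r j.

Lemma weight_of_lt (i j : nat) : (1 <= i < j)%nat -> (j <= n)%nat ->
  weight p (r i) (r j) = Rpower (r j - r i) p.
Proof.
  intros hij hj. unfold weight. rewrite Rabs_minus_sym, Rabs_right; [reflexivity|].
  pose proof (r_incr i j hij hj). lra.
Qed.

Lemma r_le (i j : nat) : (1 <= i <= j)%nat -> (j <= n)%nat -> r i <= r j.
Proof.
  intros hij hj. destruct (Nat.eq_dec i j) as [->|hne]; [lra|].
  apply Rlt_le, r_incr; lia.
Qed.

Lemma weight_nested (i k l j : nat) :
  (1 <= i <= k)%nat -> (k < l <= j)%nat -> (j <= n)%nat ->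
  weight p (r i) (r j) <= weight p (r k) (r l).
Proof.
  intros hik hlj hj. rewrite !weight_of_lt by lia.
  pose proof (r_incr k l ltac:(lia) ltac:(lia)).
  pose proof (r_le i k ltac:(lia) ltac:(lia)). pose proof (r_le l j ltac:(lia) hj).
  apply Rpower_le_contravar; lra.
Qed.

Lemma weight_quadrangle (i k j l : nat) :
  (1 <= i < k)%nat -> (k < j <= l)%nat -> (l <= n)%nat ->
  weight p (r i) (r j) + weight p (r k) (r l) <= weight p (r i) (r l) + weight p (r k) (r j).
Proof.
  intros hik hjl hl. rewrite !weight_of_lt by lia.
  pose proof (r_incr i k ltac:(lia) ltac:(lia)). pose proof (r_incr k j ltac:(lia) ltac:(lia)).
  pose proof (r_le j l ltac:(lia) hl).
  pose proof (Rpower_increment_le p (r k - r i) (r j - r k) (r l - r k)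
    p_neg ltac:(lra) ltac:(lra)) as hconv.
  replace (r j - r k + (r k - r i)) with (r j - r i) in hconv by ring.
  replace (r l - r k + (r k - r i)) with (r l - r i) in hconv by ring.
  lra.
Qed.

End PowerWeights.

Lemma incr_of_succ (n : nat) (r : nat -> R) :
  (forall i, (1 <= i)%nat -> (i < n)%nat -> r i < r (S i)) ->
  forall i j, (1 <= i < j)%nat -> (j <= n)%nat -> r i < r j.
Proof.
  intros hsucc i j hij hj. induction j as [|j IH]; [lia|].
  destruct (Nat.eq_dec i j) as [->|hne]; [apply hsucc; lia|].
  apply (Rlt_trans _ (r j)); [apply IH | apply hsucc]; lia.
Qed.

Theorem proposition3 (N : nat) (p : R) (r : nat -> R)
  (hN3 : (3 <= N)%nat) (hNodd : Nat.odd N = true) (hp : p < 0)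
  (h0 : 0 <= r 1%nat) (h1 : r N <= 1)
  (hinc : forall i : nat, (1 <= i)%nat -> (i < N)%nat -> r i < r (S i)) :
  forall tau : nat -> nat, is_perm N tau ->
    cycle_cost N p r (sigma_opt N) <= cycle_cost N p r tau.
Proof.
  intros tau htau.
  apply Nat.odd_spec in hNodd as [m ->].
  pose proof (incr_of_succ _ r hinc) as hr.
  apply (sigma_opt_tour_optimal m (fun a b => weight p (r a) (r b))); [| | |lia|exact htau].
  - intros i j. apply weight_sym.
  - intros i k l j. apply weight_nested; auto.
  - intros i k j l. apply weight_quadrangle; auto.
Qed.
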